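(* Fix $\eta\in[0,1]$ and an integer $N\ge1$, and consider the boosted BEHC$(N)$ driven by strategies as in the context. Let $i\ge N+1$, let $x^{i-1}$ be such that $x_{i-N}^{i-1}\ne\mathbf 0^{N}$, and let $\hat u^{i}\in\{a,b\}^{i}$ be such that $\hat u_l=b$ for some $l\in[k_{i-1}:i-1]$. Then $$P(x_i\mid \hat u^{i},x^{i-1})=P\big(x_i\mid \hat u_l^{i},\,q_{i-1}(x_{i-N}^{i-1})\big)$$ (for all $x_i$, whenever the conditioning events have positive probability).
   Context: $\bar\eta=1-\eta$, $[a:b]=\{a,\dots,b\}$, $x_j^{k}=(x_j,\dots,x_k)$. $\mathcal Q=[0:N]$, $g_U(q,1)=0$, $g_U(q,0)=q+1$ for $q\in[0:N-1]$, $g_U(N,0)=N$. BEHC battery law $P(S_i=0\mid x_i,s_{i-1})=\bar\eta\,\mathbb{1}\{x_i=s_{i-1}\}$ for $x_i\le s_{i-1}$; modified law $P_U(s_i\mid x_i,s_{i-1},q_{i-1})=\mathbb{1}\{s_i=1\}$ if $q_{i-1}\in\{N-1,N\}$ and $x_i=0$, otherwise the BEHC law. Strategies: $\hat u\in\{a,b\}$ with $f_a(s)=0$ and $f_b(s)=s$. The joint distribution of $(s_0^n,\hat u^n,x^n,q_0^n)$ is $$\mathbb{1}\{s_0=0,q_0=0\}\prod_{i=1}^{n}P(\hat u_i\mid\hat u^{i-1},x^{i-1})\,\mathbb{1}\{x_i=f_{\hat u_i}(s_{i-1})\}\,P_U(s_i\mid x_i,s_{i-1},q_{i-1})\,\mathbb{1}\{q_i=g_U(q_{i-1},x_i)\},$$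 where the conditionals $P(\hat u_i\mid\hat u^{i-1},x^{i-1})$ are arbitrary. For $i\ge N+1$, $q_{i-1}=q_{i-1}(x_{i-N}^{i-1})$ is the number of 0's following the last 1 in $x_{i-N}^{i-1}$ ($=N$ if all are 0), and $k_{i-1}=i-(q_{i-1}+1)$, i.e. $k_{i-1}$ is the index of the last 1 among $x_{i-N}^{i-1}$ if there is one, and $i-(N+1)$ otherwise. *)

From mathcomp Require Import all_boot all_order all_algebra.
Set Implicit Arguments. Unset Strict Implicit. Unset Printing Implicit Defensive.
Import Order.TTheory GRing.Theory Num.Theory.
Local Open Scope ring_scope.

(* Alphabets: x_i, s_i : bool (false = 0, true = 1);
   strategies u : bool with false = a, true = b;  q_i : 'I_(N.+1) = [0:N]. *)

Definition gU (N q : nat) (x : bool) : nat :=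
  if x then 0%N else if (q < N)%N then q.+1 else N.

Definition fstrat (u s : bool) : bool := if u then s else false.

Definition behc {R : pzRingType} (eta : R) (s x sp : bool) : R :=
  let p0 := (1 - eta) * (x == sp)%:R in if s then 1 - p0 else p0.

Definition PU {R : pzRingType} (eta : R) (N : nat) (s x sp : bool) (qp : nat) : R :=
  if ((qp == N.-1) || (qp == N)) && ~~ x then (s == true)%:R
  else behc eta s x sp.

(* policy: pol u^{k-1} x^{k-1} u_k = P(u_k | u^{k-1}, x^{k-1}) *)
Definition policy_ok {R : numDomainType} (pol : seq bool -> seq bool -> bool -> R) :=
  forall hu hx : seq bool,
    0 <= pol hu hx true /\ 0 <= pol hu hx false /\ pol hu hx true + pol hu hx false = 1.

Section Joint.
Variables (R : realFieldType) (eta : R) (N : nat)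
          (pol : seq bool -> seq bool -> bool -> R) (n : nat).

(* joint probability of (s_0^n, u^n, x^n, q_0^n);
   s, q are indexed 0..n, u, x are indexed 1..n (stored at position k-1) *)
Definition joint (s : (n.+1).-tuple bool) (u x : n.-tuple bool)
    (q : (n.+1).-tuple 'I_N.+1) : R :=
  let Sv k := nth false s k in
  let Uv k := nth false u k.-1 in
  let Xv k := nth false x k.-1 in
  let Qv k := nat_of_ord (nth ord0 q k) in
  ((Sv 0%N == false) && (Qv 0%N == 0%N))%:R *
  \prod_(1 <= k < n.+1)
     (pol (take k.-1 u) (take k.-1 x) (Uv k)
      * (Xv k == fstrat (Uv k) (Sv k.-1))%:R
      * PU eta N (Sv k) (Xv k) (Sv k.-1) (Qv k.-1)
      * (Qv k == gU N (Qv k.-1) (Xv k))%:R).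

Definition Pr (E : seq bool -> seq bool -> seq nat -> bool) : R :=
  \sum_(s : (n.+1).-tuple bool) \sum_(u : n.-tuple bool)
  \sum_(x : n.-tuple bool) \sum_(q : (n.+1).-tuple 'I_N.+1)
     joint s u x q * (E u x (map (@nat_of_ord _) q))%:R.

Definition condP (A B : seq bool -> seq bool -> seq nat -> bool) : R :=
  Pr (fun u x q => A u x q && B u x q) / Pr B.

End Joint.

(* x_{i-N}^{i-1} from x^{i-1} *)
Definition window (N i : nat) (xh : seq bool) : seq bool := drop (i.-1 - N) xh.

(* number of 0's following the last 1 in w (= N if all are 0, with size w = N) *)
Definition qwin (N : nat) (w : seq bool) : nat :=
  if has id w then find id (rev w) else N.

Definition kidx (N i : nat) (xh : seq bool) : nat :=
  (i - (qwin N (window N i xh)).+1)%N.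

Definition evXi (i : nat) (xi : bool) := fun (u x : seq bool) (q : seq nat) =>
  nth false x i.-1 == xi.
Definition evHist (uh xh : seq bool) := fun (u x : seq bool) (q : seq nat) =>
  (u == uh) && (take (size xh) x == xh).
Definition evTail (i l : nat) (uh : seq bool) (qv : nat) :=
  fun (u x : seq bool) (q : seq nat) =>
  (drop l.-1 u == drop l.-1 uh) && (nth 0%N q i.-1 == qv).

(* Write i = m + 1 and q = q_m.  Summing out the battery states, the probability of a
   history (u^m, x^m) and S_m = s is the forward weight alpha m u x s.  When the last 1
   of x^m is at time m - q with q < N and u_l = b for some l >= m - q, the boost is
   inactive from time l - 1 on: u_l = b forces x_l = s_(l-1), which resets the law of
   S_l to one that does not depend on the past, and afterwards only zeros are sent.
   So alpha m u x is proportional to a law that depends only on u_(l+1), ..., u_m, and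
   the conditional law of x_i given u_i and any event made of such histories is the
   same.  Both conditioning events of the theorem are of this kind. *)

From mathcomp Require Import all_boot all_order all_algebra.
From mathcomp Require Import ring zify.
Set Implicit Arguments. Unset Strict Implicit. Unset Printing Implicit Defensive.
Import Order.TTheory GRing.Theory Num.Theory.
Local Open Scope ring_scope.

Lemma big_tuple_rcons (R : nmodType) (T : finType) m (G : m.+1.-tuple T -> R) :
  \sum_(t : m.+1.-tuple T) G t = \sum_(t : m.-tuple T) \sum_(a : T) G (rcons_tuple t a).
Proof.
rewrite pair_big /= (reindex (fun p : m.-tuple T * T => rcons_tuple p.1 p.2)) //=.
exists (fun t : m.+1.-tuple T => (belast_tuple (thead t) (behead_tuple t),
                                   last (thead t) (behead t))) => [[t a] _ | t _].
  case: t => [[|y s] st] /=.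
    by congr pair; apply: val_inj.
  by rewrite /thead (tnth_nth y) /=; congr pair;
    [apply: val_inj; rewrite /= belast_rcons | rewrite last_rcons].
case: t => [[|y s] st] //; apply: val_inj => /=.
by rewrite /thead (tnth_nth y) /= -lastI.
Qed.

Lemma big_tuple0 (R : nmodType) (T : finType) (G : 0.-tuple T -> R) :
  \sum_(t : 0.-tuple T) G t = G [tuple].
Proof. by rewrite (big_pred1 [tuple]) // => t; rewrite [t]tuple0 /= eqxx. Qed.

Lemma sum_bool_natr_eq (R : pzSemiRingType) (G : bool -> R) (a : bool) :
  \sum_(b : bool) (b == a)%:R * G b = G a.
Proof. by rewrite big_bool; case: a; rewrite /= mul1r mul0r ?addr0 ?add0r. Qed.

Lemma sum_ord_natr_eq (R : pzSemiRingType) n (v : nat) (G : nat -> R) : (v < n)%N ->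
  \sum_(c : 'I_n) (nat_of_ord c == v)%:R * G c = G v.
Proof.
move=> ltvn; rewrite (bigD1 (Ordinal ltvn)) //= eqxx mul1r big1 ?addr0 // => c.
by rewrite -val_eqE /= => /negbTE ->; rewrite mul0r.
Qed.

Lemma sum_proportional (R : pzRingType) (I : finType) (F : I -> bool -> R) (G : bool -> R) :
  (forall i, exists c, forall b, F i b = c * G b) ->
  exists c, forall b, \sum_i F i b = c * G b.
Proof.
move=> propF.
suff [c [ct cf]] : exists c, \sum_i F i true = c * G true /\ \sum_i F i false = c * G false.
  by exists c; case.
apply: (big_ind2 (fun y1 y2 => exists c, y1 = c * G true /\ y2 = c * G false)).
- by exists 0; rewrite !mul0r.
- by move=> _ _ _ _ [c1 [-> ->]] [c2 [-> ->]]; exists (c1 + c2); rewrite !mulrDl.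
- by move=> i _; have [c Fc] := propF i; exists c; rewrite !Fc.
Qed.

Lemma take_rcons_size (T : Type) (s : seq T) a : take (size s) (rcons s a) = s.
Proof. by rewrite -cats1 take_size_cat. Qed.

Lemma nth_rcons_size (T : Type) (x0 : T) (s : seq T) a : nth x0 (rcons s a) (size s) = a.
Proof. by rewrite nth_rcons ltnn eqxx. Qed.

Section Channel.
Variables (R : realFieldType) (eta : R) (N : nat)
          (pol : seq bool -> seq bool -> bool -> R).

Definition qstate (x : seq bool) : nat := foldl (gU N) 0%N x.

Definition qtrace n (x : seq bool) : seq nat := mkseq (fun k => qstate (take k x)) n.+1.

(* [k] is 0-based: this is the weight of time step [k + 1], without the update of q. *)
Definition step_weight k (u x : seq bool) (sp s : bool) (qp : nat) : R :=
  pol (take k u) (take k x) (nth false u k)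
  * (nth false x k == fstrat (nth false u k) sp)%:R
  * PU eta N s (nth false x k) sp qp.

Definition path_weight n (s u x : seq bool) (q : seq nat) : R :=
  ((nth false s 0 == false) && (nth 0%N q 0 == 0%N))%:R *
  \prod_(1 <= k < n.+1)
    (step_weight k.-1 u x (nth false s k.-1) (nth false s k) (nth 0%N q k.-1)
     * (nth 0%N q k == gU N (nth 0%N q k.-1) (nth false x k.-1))%:R).

(* [alpha j u x s] is P(u^j, x^j, S_j = s): q is a function of x. *)
Fixpoint alpha j (u x : seq bool) (s : bool) : R :=
  if j is j'.+1 then
    \sum_(sp : bool) alpha j' u x sp * step_weight j' u x sp s (qstate (take j' x))
  else (s == false)%:R.

Lemma joint_path_weight n s u x q :
  @joint R eta N pol n s u x q = path_weight n s u x (map (@nat_of_ord _) q).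
Proof.
have nth_val k : nat_of_ord (nth ord0 q k) = nth 0%N (map (@nat_of_ord _) q) k.
  by elim: {q}(val q) k => [|c q IHq] [|k] //=.
by rewrite /joint /path_weight !nth_val; congr (_ * _); apply: eq_bigr => k _; rewrite !nth_val.
Qed.

Lemma path_weight_rcons n s b u x q c : size s = n.+1 -> size q = n.+1 ->
  path_weight n.+1 (rcons s b) u x (rcons q c)
  = path_weight n s u x q * (step_weight n u x (nth false s n) b (nth 0%N q n)
                              * (c == gU N (nth 0%N q n) (nth false x n))%:R).
Proof.
move=> ss sq; rewrite /path_weight big_nat_recr //= !nth_rcons ss sq /= -mulrA.
rewrite ltnSn ltnn eqxx; congr (_ * (_ * _)); apply: eq_big_nat => k /andP[_ ltkn].
by rewrite !nth_rcons ss sq ltkn (leq_ltn_trans (leq_pred k) ltkn).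
Qed.

Lemma qstate_rcons x b : qstate (rcons x b) = gU N (qstate x) b.
Proof. by rewrite /qstate foldl_rcons. Qed.

Lemma gU_lt q b : (gU N q b < N.+1)%N.
Proof. by rewrite /gU; case: b => //; case: ifP => h; rewrite ltnS. Qed.

Lemma qtraceS n x : (n < size x)%N ->
  qtrace n.+1 x = rcons (qtrace n x) (gU N (qstate (take n x)) (nth false x n)).
Proof. by move=> ltnx; rewrite /qtrace mkseqS (take_nth false ltnx) qstate_rcons. Qed.

Lemma nth_qtrace n x : nth 0%N (qtrace n x) n = qstate (take n x).
Proof. by rewrite nth_mkseq. Qed.

Lemma size_qtrace n x : size (qtrace n x) = n.+1.
Proof. exact: size_mkseq. Qed.

Lemma sum_q_path_weight n s u x (F : seq nat -> R) : size s = n.+1 -> (n <= size x)%N ->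
  \sum_(q : n.+1.-tuple 'I_N.+1)
     path_weight n s u x (map (@nat_of_ord _) q) * F (map (@nat_of_ord _) q)
  = path_weight n s u x (qtrace n x) * F (qtrace n x).
Proof.
elim: n s F => [|n IHn] s F ss lenx.
  rewrite big_tuple_rcons big_tuple0 /path_weight big_geq // mulr1.
  under eq_bigr => c _ do rewrite big_geq // mulr1 -mulnb natrM -mulrA mulrCA.
  by rewrite (sum_ord_natr_eq (fun c => _ * F [:: c])) // /qtrace /mkseq /= take0 andbT.
case/lastP: s ss => [|s b]; rewrite ?size_rcons // => -[ss].
rewrite big_tuple_rcons (qtraceS lenx) path_weight_rcons ?size_qtrace // nth_qtrace.
under eq_bigr => q _.
  under eq_bigr => c _ do
    rewrite /= map_rcons path_weight_rcons ?size_map ?size_tuple //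
            -(mulrA (path_weight _ _ _ _ _)).
  rewrite -mulr_sumr.
  over.
rewrite (IHn s (fun q => \sum_(c : 'I_N.+1) step_weight n u x (nth false s n) b (nth 0%N q n)
   * (nat_of_ord c == gU N (nth 0%N q n) (nth false x n))%:R * F (rcons q c))) ?(ltnW lenx) //.
rewrite nth_qtrace eqxx mulr1 -mulrA; congr (_ * _).
under eq_bigr => c _ do rewrite mulrAC mulrC.
by rewrite (sum_ord_natr_eq (fun c => _ * F (rcons _ c))) ?gU_lt.
Qed.

Lemma sum_s_path_weight n u x s : (n <= size x)%N ->
  \sum_(t : n.+1.-tuple bool) path_weight n t u x (qtrace n x) * (nth false t n == s)%:R
  = alpha n u x s.
Proof.
elim: n s => [|n IHn] s lenx.
  rewrite big_tuple_rcons big_tuple0 /path_weight /qtrace /mkseq /= take0.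
  under eq_bigr => a _ do rewrite big_geq // andbT mulr1 mulrC.
  by rewrite (sum_bool_natr_eq (fun a => (a == false)%:R)).
rewrite [RHS]/= big_tuple_rcons (qtraceS lenx).
under [RHS]eq_bigr => r _ do rewrite -IHn ?(ltnW lenx) // mulr_suml.
rewrite [RHS]exchange_big; apply: eq_bigr => t _.
under [LHS]eq_bigr => b _.
  rewrite path_weight_rcons ?size_tuple ?size_qtrace // nth_rcons size_tuple ltnn eqxx.
  rewrite nth_qtrace eqxx mulr1 mulrC.
  over.
rewrite /= (sum_bool_natr_eq (fun b => _ * step_weight _ _ _ _ b _)).
under [RHS]eq_bigr => r _ do rewrite mulrAC mulrC eq_sym.
by rewrite (sum_bool_natr_eq (fun r => _ * step_weight _ _ _ r _ _)).
Qed.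

Lemma Pr_alpha n E : Pr eta N pol n E = \sum_(u : n.-tuple bool) \sum_(x : n.-tuple bool)
   (E u x (qtrace n x))%:R * \sum_(s : bool) alpha n u x s.
Proof.
rewrite /Pr exchange_big; apply: eq_bigr => u _.
rewrite exchange_big; apply: eq_bigr => x _ /=.
under eq_bigr => t _.
  under eq_bigr => q _ do rewrite joint_path_weight.
  rewrite (sum_q_path_weight u (fun q => (E u x q)%:R)) ?size_tuple //.
  over.
rewrite -mulr_suml mulrC; congr (_ * _).
under [RHS]eq_bigr => s _ do rewrite -sum_s_path_weight ?size_tuple //.
rewrite exchange_big; apply: eq_bigr => t _; rewrite -mulr_sumr.
under eq_bigr => s _ do rewrite eq_sym -[_%:R]mulr1.
by rewrite (sum_bool_natr_eq (fun=> 1)) mulr1.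
Qed.

Lemma alpha_prefix j u1 u2 x1 x2 : take j u1 = take j u2 -> take j x1 = take j x2 ->
  alpha j u1 x1 =1 alpha j u2 x2.
Proof.
elim: j => [|j IHj] eu ex s //=.
have prefix (s1 s2 : seq bool) : take j.+1 s1 = take j.+1 s2 ->
    take j s1 = take j s2 /\ nth false s1 j = nth false s2 j.
  move=> e; split; first by rewrite -(take_takel _ (leqnSn j)) e take_takel.
  by rewrite -(nth_take _ (ltnSn j)) e nth_take.
have [eu' enu] := prefix _ _ eu; have [ex' enx] := prefix _ _ ex.
by apply: eq_bigr => sp _; rewrite IHj // /step_weight eu' ex' enu enx.
Qed.

Lemma sum_PU x sp qp : \sum_(s : bool) PU eta N s x sp qp = 1.
Proof. by rewrite big_bool /PU; case: ifP => _; rewrite /= ?addr0 // /behc subrK. Qed.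

Definition next_weight m (u x : seq bool) (a b : bool) : R :=
  \sum_(s : bool) alpha m u x s * pol u x a * (b == fstrat a s)%:R.

Lemma sum_alpha_rcons m u x a b : size u = m -> size x = m ->
  \sum_(s : bool) alpha m.+1 (rcons u a) (rcons x b) s = next_weight m u x a b.
Proof.
move=> su sx; have tu : take m (rcons u a) = u by rewrite -su take_rcons_size.
have tx : take m (rcons x b) = x by rewrite -sx take_rcons_size.
have nu : nth false (rcons u a) m = a by rewrite -su nth_rcons_size.
have nx : nth false (rcons x b) m = b by rewrite -sx nth_rcons_size.
rewrite /= exchange_big; apply: eq_bigr => sp _.
rewrite /step_weight -!mulr_sumr sum_PU mulr1 tu tx nu nx mulrA.
rewrite (alpha_prefix (u2 := u) (x2 := x)) //.
  by rewrite tu -su take_size.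
by rewrite tx -sx take_size.
Qed.

Lemma Pr_rcons m E : Pr eta N pol m.+1 E =
  \sum_(u : m.-tuple bool) \sum_(a : bool) \sum_(x : m.-tuple bool) \sum_(b : bool)
    (E (rcons u a) (rcons x b) (qtrace m.+1 (rcons x b)))%:R * next_weight m u x a b.
Proof.
rewrite Pr_alpha big_tuple_rcons; apply: eq_bigr => u _; apply: eq_bigr => a _.
rewrite big_tuple_rcons; apply: eq_bigr => x _; apply: eq_bigr => b _.
by rewrite sum_alpha_rcons ?size_tuple.
Qed.

(* Unnormalised law of the battery state after the encoder played [b] (so that
   [x = s] and the state is reset to law [behc _ _ true true]) and then sent only
   zeros under the strategies [us] with the boost inactive. *)
Definition tail_law (us : seq bool) : bool -> R :=
  foldl (fun v a s => \sum_(sp : bool) v sp * (false == fstrat a sp)%:R * behc eta s false sp)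
        (fun s => behc eta s true true) us.

Lemma PU_behc s x sp qp : x || (qp < N.-1)%N -> PU eta N s x sp qp = behc eta s x sp.
Proof. by rewrite /PU; case: x => //= ltqN; rewrite ifF //; apply/negbTE; lia. Qed.

Lemma behc_diag s b : behc eta s b b = behc eta s true true.
Proof. by rewrite /behc !eqxx. Qed.

Lemma alpha_tail_law l j u x : (0 < l <= j)%N -> (j <= size u)%N -> nth false u l.-1 ->
  (forall t, (l.-1 <= t < j)%N -> nth false x t || (qstate (take t x) < N.-1)%N) ->
  (forall t, (l <= t < j)%N -> ~~ nth false x t) ->
  exists c, forall s, alpha j u x s = c * tail_law (drop l (take j u)) s.
Proof.
move=> /andP[l_gt0 lelj] + ul.
elim: j lelj => [|j IHj] lelj leju unmod zeros; first lia.
have unmod_j : nth false x j || (qstate (take j x) < N.-1)%N by apply: unmod; lia.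
case: (ltngtP l j.+1) lelj => // [ltlj | eq_l] _; last first.
  subst l.
  exists (alpha j u x (nth false x j) * pol (take j u) (take j x) true) => s.
  rewrite drop_oversize ?size_take_min ?geq_minl //= /step_weight ul /=.
  transitivity (\sum_(sp : bool) (sp == nth false x j)%:R
      * (alpha j u x sp * pol (take j u) (take j x) true * behc eta s (nth false x j) sp)).
    by apply: eq_bigr => sp _; rewrite PU_behc // eq_sym; ring.
  by rewrite sum_bool_natr_eq behc_diag.
have [c alpha_j] : exists c, forall s, alpha j u x s = c * tail_law (drop l (take j u)) s.
  by apply: IHj => [||t lt|t lt]; [|lia|apply: unmod; lia|apply: zeros; lia].
have x_j : nth false x j = false by apply/negbTE/zeros; lia.
exists (c * pol (take j u) (take j x) (nth false u j)) => s.
rewrite (take_nth false leju) drop_rcons ?size_take_min ?leq_min ?ltlj //; last by lia.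
rewrite /tail_law foldl_rcons -/(tail_law _) mulr_sumr /=.
apply: eq_bigr => sp _; rewrite alpha_j /step_weight PU_behc // x_j; ring.
Qed.

Lemma qstate_nseq a r : (a + r <= N)%N -> foldl (gU N) a (nseq r false) = (a + r)%N.
Proof. by elim: r a => [|r IHr] a le_arN /=; rewrite ?addn0 // /gU ifT ?IHr ?addSnnS //; lia. Qed.

Lemma qstate_last_one x : (qstate x < N)%N -> (qstate x < size x)%N ->
  exists y, x = y ++ true :: nseq (qstate x) false.
Proof.
elim/last_ind: x => [|x b IHx] //; rewrite qstate_rcons size_rcons.
case: b => /= [_ _|]; first by exists x; rewrite cats1.
rewrite /gU; case: ifP => [ltqN _|]; last by rewrite ltnn.
rewrite ltnS => /(IHx ltqN) [y ex]; exists y.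
by rewrite {1}ex rcons_cat /= -cats1 -[[:: false]]/(nseq 1 false) -nseqD addn1.
Qed.

Lemma qstate_take_last_one y r t : (size y < t <= size y + r.+1)%N -> (r <= N)%N ->
  qstate (take t (y ++ true :: nseq r false)) = (t - (size y).+1)%N.
Proof.
move=> /andP[lt_yt le_t] le_rN; rewrite take_cat ltnNge ltnW //=.
have -> : (t - size y = (t - (size y).+1).+1)%N by lia.
rewrite /= take_nseq; last by lia.
rewrite /qstate foldl_cat /= qstate_nseq //; lia.
Qed.

Lemma nth_last_one y r t : (size y <= t)%N ->
  nth false (y ++ true :: nseq r false) t = (t == size y).
Proof.
move=> le_yt; rewrite nth_cat ltnNge le_yt /=.
case e: (t - size y)%N => [|k] /=; first by apply/esym/eqP; lia.
by rewrite nth_nseq if_same; apply/esym/eqP; lia.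
Qed.

Lemma alpha_last_one m l u x : (0 < l <= m)%N -> size u = m -> size x = m ->
  nth false u l.-1 -> (qstate x < N)%N -> (qstate x < m)%N -> (m - qstate x <= l)%N ->
  exists c, forall s, alpha m u x s = c * tail_law (drop l u) s.
Proof.
move=> /andP[l_gt0 lelm] su sx ul ltqN ltqm le_l.
have [y ex] : exists y, x = y ++ true :: nseq (qstate x) false.
  by apply: qstate_last_one; rewrite ?sx.
set q := qstate x in ltqN ltqm le_l ex.
have sy : size y = (m - q).-1 by move: sx; rewrite ex size_cat /= size_nseq; lia.
rewrite -{2}[u]take_size su.
apply: alpha_tail_law => [||//|t /andP[le_t lt_t]|t /andP[le_t lt_t]].
- by rewrite l_gt0.
- by rewrite su.
- rewrite ex nth_last_one; last by lia.
  by case: eqP => [//|ne_t]; rewrite qstate_take_last_one; lia.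
- by rewrite ex nth_last_one; [apply/eqP; lia | lia].
Qed.

Definition output_weight (us : seq bool) (a b : bool) : R :=
  \sum_(s : bool) tail_law us s * (b == fstrat a s)%:R.

Definition event_weight m (P : seq bool -> seq bool -> bool) (a b : bool) : R :=
  \sum_(u : m.-tuple bool) \sum_(x : m.-tuple bool) (P u x)%:R * next_weight m u x a b.

Lemma Pr_event_rcons m E (P : seq bool -> seq bool -> bool) a (X : pred bool) :
  (forall (u x : m.-tuple bool) a' b,
     E (rcons u a') (rcons x b) (qtrace m.+1 (rcons x b)) = [&& X b, a' == a & P u x]) ->
  Pr eta N pol m.+1 E = \sum_(b : bool) (X b)%:R * event_weight m P a b.
Proof.
move=> eE; rewrite Pr_rcons.
transitivity (\sum_(u : m.-tuple bool) \sum_(a' : bool) (a' == a)%:R *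
    \sum_(x : m.-tuple bool) \sum_(b : bool) (X b)%:R * ((P u x)%:R * next_weight m u x a' b)).
  apply: eq_bigr => u _; apply: eq_bigr => a' _; rewrite mulr_sumr.
  apply: eq_bigr => x _; rewrite mulr_sumr; apply: eq_bigr => b _.
  by rewrite eE -!mulnb !natrM; ring.
under eq_bigr => u _ do rewrite (sum_bool_natr_eq (fun a' =>
  \sum_(x : m.-tuple bool) \sum_(b : bool) _ * (_ * next_weight m u x a' b))).
under [RHS]eq_bigr => b _ do rewrite /event_weight mulr_sumr.
rewrite [RHS]exchange_big; apply: eq_bigr => u _.
under [RHS]eq_bigr => b _ do rewrite mulr_sumr.
exact: exchange_big.
Qed.

Lemma event_weight_proportional m l qv uh a (P : seq bool -> seq bool -> bool) :
  (0 < l <= m)%N -> nth false uh l.-1 -> (qv < N)%N -> (qv < m)%N -> (m - qv <= l)%N ->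
  (forall u x : m.-tuple bool, P u x -> drop l.-1 u = drop l.-1 uh /\ qstate x = qv) ->
  exists c, forall b, event_weight m P a b = c * output_weight (drop l uh) a b.
Proof.
move=> l_range uhl ltqN ltqm le_l tailP; have /andP[l_gt0 _] := l_range.
apply: sum_proportional => u; apply: sum_proportional => x.
case Pux: (P u x); last by exists 0 => b; rewrite !mul0r.
have [du qx] := tailP u x Pux.
have ul : nth false u l.-1 by rewrite -[l.-1]addn0 -nth_drop du nth_drop addn0.
have dl : drop l u = drop l uh by rewrite -(prednK l_gt0) -add1n -!drop_drop du.
have [c ac] : exists c, forall s, alpha m u x s = c * tail_law (drop l u) s.
  by apply: alpha_last_one; rewrite ?size_tuple ?qx.
exists (c * pol u x a) => b; rewrite mul1r /next_weight /output_weight mulr_sumr.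
by apply: eq_bigr => s _; rewrite ac dl; ring.
Qed.

Lemma condP_last_one m l qv uh a E (P : seq bool -> seq bool -> bool) xi :
  (0 < l <= m)%N -> nth false uh l.-1 -> (qv < N)%N -> (qv < m)%N -> (m - qv <= l)%N ->
  (forall u x : m.-tuple bool, P u x -> drop l.-1 u = drop l.-1 uh /\ qstate x = qv) ->
  (forall (u x : m.-tuple bool) a' b,
     E (rcons u a') (rcons x b) (qtrace m.+1 (rcons x b)) = (a' == a) && P u x) ->
  0 < Pr eta N pol m.+1 E ->
  condP eta N pol m.+1 (evXi m.+1 xi) E
  = output_weight (drop l uh) a xi / \sum_(b : bool) output_weight (drop l uh) a b.
Proof.
move=> l_range uhl ltqN ltqm le_l tailP eE.
have [c prop] := event_weight_proportional a l_range uhl ltqN ltqm le_l tailP.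
have PrE : Pr eta N pol m.+1 E = \sum_(b : bool) (predT b)%:R * event_weight m P a b.
  exact: Pr_event_rcons.
have PrXE : Pr eta N pol m.+1 (fun u x q => evXi m.+1 xi u x q && E u x q)
    = \sum_(b : bool) (b == xi)%:R * event_weight m P a b.
  by apply: Pr_event_rcons => u x a' b; rewrite /evXi eE /= nth_rcons size_tuple ltnn eqxx.
rewrite /condP PrE PrXE sum_bool_natr_eq prop.
under eq_bigr => b _ do rewrite mul1r prop.
rewrite -mulr_sumr => /lt0r_neq0; rewrite mulf_eq0 negb_or => /andP[c_neq0 _].
by rewrite invfM mulrACA mulfV // mul1r.
Qed.

End Channel.

Lemma evHist_rcons uh a xh u x a' b q : size x = size xh ->
  evHist (rcons uh a) xh (rcons u a') (rcons x b) q = (a' == a) && ((u == uh) && (x == xh)).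
Proof. by move=> sx; rewrite /evHist eqseq_rcons -sx take_rcons_size andbAC andbC. Qed.

Lemma evTail_rcons N m l uh a qv u x a' b :
  size u = m -> size uh = m -> size x = m -> (l <= m.+1)%N ->
  evTail m.+1 l (rcons uh a) qv (rcons u a') (rcons x b) (qtrace N m.+1 (rcons x b))
  = (a' == a) && ((drop l.-1 u == drop l.-1 uh) && (qstate N x == qv)).
Proof.
move=> su suh sx lelm; rewrite /evTail !drop_rcons ?su ?suh; try lia.
by rewrite eqseq_rcons /qtrace nth_mkseq // -sx take_rcons_size andbAC andbC.
Qed.

Lemma qstate_find N x : has id x -> (find id (rev x) <= N)%N -> qstate N x = find id (rev x).
Proof.
elim/last_ind: x => [|x b IHx] //; rewrite rev_rcons qstate_rcons has_rcons.
by case: b => //= x1 leN; rewrite IHx ?(ltnW leN) // /gU leN.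
Qed.

Lemma qstate_window N m xh : size xh = m -> (N <= m)%N -> has id (window N m.+1 xh) ->
  qstate N xh = qwin N (window N m.+1 xh) /\ (qwin N (window N m.+1 xh) < N)%N.
Proof.
rewrite /window /qwin /= => sxh leNm has_w; rewrite has_w.
have sw : size (drop (m - N) xh) = N by rewrite size_drop sxh; lia.
have ltwN : (find id (rev (drop (m - N) xh)) < N)%N.
  by rewrite -{2}sw -size_rev -has_find has_rev.
have e : find id (rev xh) = find id (rev (drop (m - N) xh)).
  by rewrite -{1}(cat_take_drop (m - N) xh) rev_cat find_cat has_rev has_w.
split=> //; rewrite -e qstate_find // ?e ?(ltnW ltwN) //.
by rewrite -(cat_take_drop (m - N) xh) has_cat has_w orbT.
Qed.

Theorem lemma6 (R : realFieldType) (eta : R) (N : nat)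
    (pol : seq bool -> seq bool -> bool -> R)
    (i : nat) (xh uh : seq bool) (l : nat) (xi : bool) :
  0 <= eta <= 1 -> (1 <= N)%N -> policy_ok pol ->
  (N.+1 <= i)%N -> size xh = i.-1 -> size uh = i ->
  has id (window N i xh) ->
  (kidx N i xh <= l <= i.-1)%N -> nth false uh l.-1 = true ->
  0 < Pr eta N pol i (evHist uh xh) ->
  0 < Pr eta N pol i (evTail i l uh (qwin N (window N i xh))) ->
  condP eta N pol i (evXi i xi) (evHist uh xh)
  = condP eta N pol i (evXi i xi) (evTail i l uh (qwin N (window N i xh))).
Proof.
move=> _ _ _; case: i => [//|m] /= leNm sxh suh has_w /andP[le_kl le_lm] uhl posH posT.
have [qx ltqN] := qstate_window sxh leNm has_w.
rewrite /kidx in le_kl; set qv := qwin N _ in qx ltqN le_kl posT *.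
have ltqm : (qv < m)%N by lia.
have l_range : (0 < l <= m)%N by lia.
have le_l : (m - qv <= l)%N by lia.
set uh' := take m uh; set a := nth false uh m.
have suh' : size uh' = m by rewrite size_take suh ltnSn.
have uhl' : nth false uh' l.-1 by rewrite nth_take ?uhl //; lia.
have euh : uh = rcons uh' a by rewrite -take_nth ?suh // take_oversize ?suh.
rewrite {}euh in posH posT *.
pose hist u x := (u == uh') && (x == xh).
pose tail u x := (drop l.-1 u == drop l.-1 uh') && (qstate N x == qv).
rewrite (condP_last_one (a := a) (P := hist) xi l_range uhl' ltqN ltqm le_l) //.
- rewrite (condP_last_one (a := a) (P := tail) xi l_range uhl' ltqN ltqm le_l) //.
  + by move=> u x /andP[/eqP -> /eqP ->].
  + by move=> u x a' b; rewrite evTail_rcons ?size_tuple ?(leqW le_lm).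
- by move=> u x /andP[/eqP -> /eqP ->].
- by move=> u x a' b; rewrite evHist_rcons // size_tuple sxh.
Qed.
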